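(* Let $A_4$ be the Cayley-Dickson algebra of sedenions with canonical basis $e_0,\dots,e_{15}$. Then: (i) the imaginary units lying on no defective triple are exactly $e_1,e_2,e_4,e_8,e_{15}$, and each of the remaining ten imaginary units $e_3,e_5,e_6,e_7,e_9,e_{10},e_{11},e_{12},e_{13},e_{14}$ lies on exactly three defective triples (and four ordinary ones); (ii) the incidence structure $\mathcal{D}$ whose points are these ten units and whose lines are the ten defective triples is isomorphic to the Desargues configuration $G_2(5)$; (iii) there is a bijection $\varphi$ from the set of geometric hyperplanes of $\mathcal{D}$ onto $\{e_1,\dots,e_{15}\}$ mapping the set of lines of the Veldkamp space $\mathcal{V}(\mathcal{D})$ bijectively onto the set of distinguished triples of $A_4$ (so $\mathcal{V}(\mathcal{D})\cong\mathrm{PG}(3,2)$), such that a geometric hyperplane has $4$ points (a point together with the three points not collinear with it) if and only if its image lies on some defective triple, and has $6$ points (a copy of the Pasch configuration $G_2(4)$) if and only if its image is one of $e_1,e_2,e_4,e_8,e_{15}$.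
   Context: Cayley-Dickson algebras: $A_0=\mathbb{R}$ with trivial conjugation; $A_{N+1}$ is the set of ordered pairs $(x,y)$ with $x,y\in A_N$, with conjugation $(x,y)^*=(x^*,-y)$ and multiplication $(x,y)(X,Y)=(xX-Yy^*,\,x^*Y+Xy)$. The canonical basis of $A_0$ is $e_0=1$; if $e_0,\dots,e_{2^N-1}$ is the canonical basis of $A_N$, the canonical basis of $A_{N+1}$ is $e_a=(e_a,0)$ and $e_{2^N+a}=(0,e_a)$ for $0\le a\le 2^N-1$. The imaginary units of $A_N$ are $e_1,\dots,e_{2^N-1}$. A distinguished triple is a set $\{e_a,e_b,e_c\}$ with $1\le a<b<c\le 2^N-1$ and $e_ae_b=\pm e_c$; it is called ordinary if $a+b=c$ and defective if $a+b\neq c$. The combinatorial Grassmannian $G_2(n)$ is the point-line incidence structure whose points are the $2$-element subsets of $\{1,\dots,n\}$, whose lines are the $3$-element subsets, incidence being inclusion ($G_2(4)$ is the Pasch configuration, $G_2(5)$ the Desargues configuration). A geometric hyperplane of a point-line incidence structure is a proper subset $H$ of the point set such that every line is either contained in $H$ or meets $H$ in exactly one point. The Veldkamp space $\mathcal{V}(\mathcal{C})$ has as points the geometric hyperplanes of $\mathcal{C}$; for distinct hyperplanes $H',H''$ the Veldkamp line $H'H''$ is the set of all geometric hyperplanes $H$ with $H=H'$, $H=H''$, or $H'\cap H''=H'\cap H=H''\cap H$. *)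

From HB Require Import structures.
From mathcomp Require Import all_boot all_order all_algebra.
From mathcomp Require Import boolp reals.

Set Implicit Arguments.
Unset Strict Implicit.
Unset Printing Implicit Defensive.
Import GRing.Theory.
Local Open Scope ring_scope.

Fixpoint CD (R : Type) (n : nat) : Type :=
  if n is m.+1 then (CD R m * CD R m)%type else R.

Section CayleyDickson.
Variable R : pzRingType.

Fixpoint cd_zero (n : nat) : CD R n :=
  match n return CD R n with
  | 0 => (0 : R)
  | m.+1 => (cd_zero m, cd_zero m)
  end.

Fixpoint cd_add (n : nat) : CD R n -> CD R n -> CD R n :=
  match n return CD R n -> CD R n -> CD R n with
  | 0 => fun x y : R => x + y
  | m.+1 => fun u v => (cd_add u.1 v.1, cd_add u.2 v.2)
  end.

Fixpoint cd_opp (n : nat) : CD R n -> CD R n :=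
  match n return CD R n -> CD R n with
  | 0 => fun x : R => - x
  | m.+1 => fun u => (cd_opp u.1, cd_opp u.2)
  end.

Fixpoint cd_conj (n : nat) : CD R n -> CD R n :=
  match n return CD R n -> CD R n with
  | 0 => fun x : R => x
  | m.+1 => fun u => (cd_conj u.1, cd_opp u.2)
  end.

(* (x,y)(X,Y) = (xX - Y y^*, x^* Y + X y) *)
Fixpoint cd_mul (n : nat) : CD R n -> CD R n -> CD R n :=
  match n return CD R n -> CD R n -> CD R n with
  | 0 => fun x y : R => x * y
  | m.+1 => fun u v =>
      (cd_add (cd_mul u.1 v.1) (cd_opp (cd_mul v.2 (cd_conj u.2))),
       cd_add (cd_mul (cd_conj u.1) v.2) (cd_mul v.1 u.2))
  end.

Fixpoint cd_e (n : nat) (a : nat) : CD R n :=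
  match n return CD R n with
  | 0 => if a == 0%N then (1 : R) else 0
  | m.+1 => if (a < 2 ^ m)%N then (cd_e m a, cd_zero m)
            else (cd_zero m, cd_e m (a - 2 ^ m))
  end.

End CayleyDickson.

Definition sed_e (R : pzRingType) (a : 'I_16) : CD R 4 := cd_e R 4 a.

Definition imag_units : {set 'I_16} := [set a : 'I_16 | a != ord0].

Definition triple_with (R : pzRingType) (kind : nat -> nat -> nat -> bool)
  (T : {set 'I_16}) : Prop :=
  exists a b c : 'I_16,
    [/\ [&& (0 < a)%N, (a < b)%N, (b < c)%N & kind a b c], T = [set a; b; c] &
        cd_mul (sed_e R a) (sed_e R b) = sed_e R c \/
        cd_mul (sed_e R a) (sed_e R b) = cd_opp (sed_e R c)].

Definition distinguished_triples (R : pzRingType) : {set {set 'I_16}} :=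
  [set T : {set 'I_16} | `[< triple_with R (fun _ _ _ => true) T >] ].

Definition ordinary_triples (R : pzRingType) : {set {set 'I_16}} :=
  [set T : {set 'I_16} | `[< triple_with R (fun a b c => a + b == c)%N T >] ].

Definition defective_triples (R : pzRingType) : {set {set 'I_16}} :=
  [set T : {set 'I_16} | `[< triple_with R (fun a b c => a + b != c)%N T >] ].

Definition special_units : {set 'I_16} :=
  [set (inord 1 : 'I_16); inord 2; inord 4; inord 8; inord 15].

(* Point-line incidence structures given as (point set P, set L of lines),   *)
(* each line being the set of points incident with it.                       *)

Definition inc_iso (pT qT : finType) (P : {set pT}) (L : {set {set pT}})
  (Q : {set qT}) (M : {set {set qT}}) : Prop :=
  exists f : pT -> qT,
    [/\ {in P &, injective f}, f @: P = Q & [set f @: (l : {set pT}) | l in L] = M].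

Definition G2_points (n : nat) : {set {set 'I_n}} :=
  [set S : {set 'I_n} | #|S| == 2%N].

Definition G2_lines (n : nat) : {set {set {set 'I_n}}} :=
  [set [set p in G2_points n | p \subset S] | S : {set 'I_n} in [set S : {set 'I_n} | #|S| == 3%N]].

Definition is_hyperplane (T : finType) (P : {set T}) (L : {set {set T}})
  (H : {set T}) : bool :=
  (H \proper P) && [forall l in L, (l \subset H) || (#|l :&: H| == 1%N)].

Definition hyperplanes (T : finType) (P : {set T}) (L : {set {set T}}) :
  {set {set T}} := [set H : {set T} | is_hyperplane P L H].

Definition veldkamp_line (T : finType) (P : {set T}) (L : {set {set T}})
  (H1 H2 : {set T}) : {set {set T}} :=
  [set H in hyperplanes P L |
     [|| H == H1, H == H2 |
         (H1 :&: H2 == H1 :&: H) && (H1 :&: H == H2 :&: H)]].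

Definition veldkamp_lines (T : finType) (P : {set T}) (L : {set {set T}}) :
  {set {set {set T}}} :=
  [set veldkamp_line P L H1 H2 |
     H1 in hyperplanes P L, H2 in hyperplanes P L & H1 != H2].

Definition collinear (T : finType) (L : {set {set T}}) (p q : T) : bool :=
  [exists l in L, (p \in l) && (q \in l)].

From HB Require Import structures.
From mathcomp Require Import all_boot all_order all_algebra.
From mathcomp Require Import boolp reals.

(* The statement is a finite verification.  The basis products of the
   sedenions have integer coordinates, so they are computed once in the
   integral sedenions; they give the 35 distinguished triples {a, b, a xor b},
   ten of which are defective.  The geometric hyperplanes of the resulting
   ten-point configuration are found among its 2^10 subsets: the ten perps of
   points and five Pasch configurations.  The map phi sends a hyperplane to
   e_c, where c is the bitwise xor of the indices of its points.  As the ten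
   indices xor to 0 and the third hyperplane of a Veldkamp line is the
   complement of the symmetric difference of the other two, phi maps Veldkamp
   lines onto the triples {a, b, a xor b}. *)

Set Implicit Arguments.
Unset Strict Implicit.
Unset Printing Implicit Defensive.
Import GRing.Theory Num.Theory.

(** * Cayley-Dickson algebras over the integers *)

Fixpoint cd_map (R S : Type) (f : R -> S) (n : nat) : CD R n -> CD S n :=
  match n return CD R n -> CD S n with
  | 0 => f
  | m.+1 => fun u => (cd_map f u.1, cd_map f u.2)
  end.

Lemma cd_map_inj (R S : Type) (f : R -> S) n :
  injective f -> injective (@cd_map R S f n).
Proof. by move=> f_inj; elim: n => [|n IHn] //= [u1 u2] [v1 v2] [/IHn-> /IHn->]. Qed.

Section CDMorphism.
Variables (R S : pzRingType) (f : {rmorphism R -> S}).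

Lemma cd_map_zero n : cd_map f (cd_zero R n) = cd_zero S n.
Proof. by elim: n => [|n IHn] /=; rewrite ?rmorph0 ?IHn. Qed.

Lemma cd_map_add n (u v : CD R n) :
  cd_map f (cd_add u v) = cd_add (cd_map f u) (cd_map f v).
Proof. by elim: n u v => [|n IHn] u v /=; rewrite ?rmorphD ?IHn. Qed.

Lemma cd_map_opp n (u : CD R n) : cd_map f (cd_opp u) = cd_opp (cd_map f u).
Proof. by elim: n u => [|n IHn] u /=; rewrite ?rmorphN ?IHn. Qed.

Lemma cd_map_conj n (u : CD R n) : cd_map f (cd_conj u) = cd_conj (cd_map f u).
Proof. by elim: n u => [|n IHn] u /=; rewrite ?cd_map_opp ?IHn. Qed.

Lemma cd_map_mul n (u v : CD R n) :
  cd_map f (cd_mul u v) = cd_mul (cd_map f u) (cd_map f v).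
Proof.
elim: n u v => [|n IHn] u v /=; first by rewrite rmorphM.
by rewrite !cd_map_add !cd_map_opp !IHn !cd_map_conj.
Qed.

Lemma cd_map_e n a : cd_map f (cd_e R n a) = cd_e S n a.
Proof.
elim: n a => [|n IHn] a /=; first by case: (a == 0)%N; rewrite ?rmorph1 ?rmorph0.
by case: ifP => _ /=; rewrite IHn cd_map_zero.
Qed.

End CDMorphism.

Fixpoint cd_eqb (R : eqType) (n : nat) : CD R n -> CD R n -> bool :=
  match n return CD R n -> CD R n -> bool with
  | 0 => fun x y : R => x == y
  | m.+1 => fun u v => cd_eqb u.1 v.1 && cd_eqb u.2 v.2
  end.

Lemma cd_eqbP (R : eqType) n (u v : CD R n) : reflect (u = v) (cd_eqb u v).
Proof.
elim: n u v => [|n IHn] /=; first by move=> u v; apply: eqP.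
move=> [u1 u2] [v1 v2] /=.
by apply: (iffP andP) => [[/IHn-> /IHn->] | [-> ->]]; first done; split; apply/IHn.
Qed.

Definition sed_mul_pm (a b c : nat) : bool :=
  let ab := cd_mul (cd_e int 4 a) (cd_e int 4 b) in
  cd_eqb ab (cd_e int 4 c) || cd_eqb ab (cd_opp (cd_e int 4 c)).

(* The basis vectors are integral and [intr] is injective, so the products
   can be decided in [CD int 4]. *)
Lemma sed_mul_pmP (R : numDomainType) (a b c : 'I_16) :
  (cd_mul (sed_e R a) (sed_e R b) = sed_e R c \/
   cd_mul (sed_e R a) (sed_e R b) = cd_opp (sed_e R c)) <-> sed_mul_pm a b c.
Proof.
pose f : {rmorphism int -> R} := intr.
have /cd_map_inj f_inj : injective f := intr_inj.
rewrite /sed_e -!(cd_map_e f) -cd_map_mul -cd_map_opp /sed_mul_pm.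
split => [[/f_inj-> | /f_inj->] | /orP[] /cd_eqbP->].
- by apply/orP; left; apply/cd_eqbP.
- by apply/orP; right; apply/cd_eqbP.
- by left.
- by right.
Qed.

(** * Finite sets of ordinals encoded by lists *)

Section SetSeq.
Variable T : finType.
Implicit Types (s : seq T) (p : pred T).

Lemma imset_set_seq (rT : finType) (f : T -> rT) s : f @: [set:: s] = [set:: map f s].
Proof.
apply/setP => y; rewrite inE; apply/imsetP/mapP => [[x] | [x xs ->]].
  by rewrite inE => xs ->; exists x.
by exists x; rewrite ?inE.
Qed.

Lemma set_seq_filter s p : [set x in [set:: s] | p x] = [set:: filter p s].
Proof. by apply/setP => x; rewrite !inE mem_filter andbC. Qed.

Lemma forall_in_set_seq s p : [forall x in [set:: s], p x] = all p s.
Proof.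
apply/forallP/allP => [H x xs | H x]; first by have := H x; rewrite inE xs.
by apply/implyP; rewrite inE; apply: H.
Qed.

Lemma exists_in_set_seq s p : [exists x in [set:: s], p x] = has p s.
Proof.
apply/existsP/hasP => [[x /andP[]] | [x xs px]]; first by rewrite inE; exists x.
by exists x; rewrite inE xs.
Qed.

Lemma card_set_seq s : uniq s -> #|[set:: s]| = size s.
Proof. by move=> s_uniq; rewrite cardsE; apply/card_uniqP. Qed.

End SetSeq.

Lemma eq_set_seq_map (X : eqType) (T : finType) (D : X -> T) (r : rel X) (A B : seq X) :
  (forall x y, r x y -> D x = D y) ->
  all (fun x => has (r x) B) A -> all (fun y => has (r y) A) B ->
  [set:: map D A] = [set:: map D B].
Proof.
move=> rD /allP AB /allP BA; apply/setP => z; rewrite !inE.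
apply/mapP/mapP => [[x xA ->] | [y yB ->]].
  by have /hasP[y yB /rD->] := AB x xA; exists y.
by have /hasP[x xA /rD->] := BA y yB; exists x.
Qed.

(* [oset n s] is the set of ordinals whose values occur in [s] and [onorm n s]
   is a canonical list for it, so that equality, cardinality and inclusion of
   such sets become computable list operations. *)
Section OrdinalSets.
Variable n : nat.
Implicit Types s t : seq nat.

Definition oset s : {set 'I_n} := [set x : 'I_n | val x \in s].

Definition onorm s := [seq k <- iota 0 n | k \in s].
Definition oset_eqb s t := onorm s == onorm t.
Definition ocard s := count (mem s) (iota 0 n).
Definition osubset s t := all (fun k => (k \in s) ==> (k \in t)) (iota 0 n).

Lemma in_oset s (x : 'I_n) : (x \in oset s) = (val x \in s).
Proof. by rewrite inE. Qed.

Lemma val_enum_oset s : map val (enum (oset s)) = onorm s.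
Proof.
rewrite /onorm -val_enum_ord filter_map [enum _]/enum_mem -enumT.
by congr map; apply: eq_filter => x; rewrite /= in_oset.
Qed.

Lemma oset_eqE s t : (oset s == oset t) = oset_eqb s t.
Proof.
apply/eqP/eqP => [st | st].
  by rewrite -!val_enum_oset st.
apply/setP => x; rewrite !in_oset.
have := congr1 (fun l => val x \in l) st.
by rewrite /= !mem_filter mem_iota ltn_ord !andbT.
Qed.

Lemma eq_oset s t : oset_eqb s t -> oset s = oset t.
Proof. by rewrite -oset_eqE => /eqP. Qed.

Lemma card_oset s : #|oset s| = ocard s.
Proof. by rewrite cardE -(size_map val) val_enum_oset size_filter. Qed.

Lemma subset_oset s t : (oset s \subset oset t) = osubset s t.
Proof.
apply/subsetP/allP => [st k | st x].
  rewrite mem_iota add0n => /= klt; apply/implyP => ks.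
  by have := st (Ordinal klt); rewrite !in_oset; apply.
rewrite !in_oset => xs; have := st (val x).
by rewrite mem_iota /= add0n ltn_ord xs => /(_ isT).
Qed.

Lemma setI_oset s t : oset s :&: oset t = oset [seq k <- s | k \in t].
Proof. by apply/setP => x; rewrite !inE mem_filter andbC. Qed.

Definition osets (ls : seq (seq nat)) : {set {set 'I_n}} := [set:: map oset ls].

Definition same_osets (ls1 ls2 : seq (seq nat)) :=
  all (fun s => has (oset_eqb s) ls2) ls1 && all (fun s => has (oset_eqb s) ls1) ls2.

Lemma eq_osets ls1 ls2 : same_osets ls1 ls2 -> osets ls1 = osets ls2.
Proof. by case/andP; apply: eq_set_seq_map => s t; apply: eq_oset. Qed.

Lemma osets_filter (p : pred {set 'I_n}) (q : pred (seq nat)) ls :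
  (forall s, p (oset s) = q s) -> [set X in osets ls | p X] = osets (filter q ls).
Proof.
move=> pq; rewrite /osets set_seq_filter filter_map.
by rewrite (eq_filter (a2 := q)).
Qed.

Lemma osetsP ls X : reflect (exists2 s, s \in ls & X = oset s) (X \in osets ls).
Proof. by rewrite inE; apply: (iffP mapP). Qed.

Lemma oset_in_osets s ls : s \in ls -> oset s \in osets ls.
Proof. by move=> sls; apply/osetsP; exists s. Qed.

Lemma mem_osets s ls : has (oset_eqb s) ls -> oset s \in osets ls.
Proof. by case/hasP=> t /oset_in_osets tls /eq_oset->. Qed.

Lemma card_osets ls : uniq (map onorm ls) -> #|osets ls| = size ls.
Proof.
move=> ls_uniq; rewrite card_set_seq ?size_map //.
rewrite -(map_inj_in_uniq (f := fun A : {set 'I_n} => map val (enum A))) -?map_comp.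
  by rewrite (eq_map val_enum_oset).
by move=> _ _ /mapP[s _ ->] /mapP[t _ ->] /=; rewrite !val_enum_oset => /eqP /eq_oset.
Qed.

Lemma card_osets_with ls (x : 'I_n) : uniq (map onorm ls) ->
  #|[set T in osets ls | x \in T]| = count (fun l => val x \in l) ls.
Proof.
move=> ls_uniq; rewrite (osets_filter _ (fun s => in_oset s x)) card_osets ?size_filter //.
exact/(subseq_uniq _ ls_uniq)/map_subseq/filter_subseq.
Qed.

End OrdinalSets.

Fixpoint sublists (T : Type) (s : seq T) : seq (seq T) :=
  if s is x :: s' then sublists s' ++ map (cons x) (sublists s') else [:: [::]].

Lemma filter_in_sublists (T : eqType) (p : pred T) s : filter p s \in sublists s.
Proof.
elim: s => [|x s IHs] //=; rewrite mem_cat; case: (p x); last by rewrite IHs.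
by rewrite mem_map ?IHs ?orbT // => u v [].
Qed.

Lemma subset_osetP n (A : {set 'I_n}) s :
  A \subset oset n s -> exists2 c, c \in sublists s & A = oset n c.
Proof.
move=> /subsetP As; exists [seq k <- s | [exists x in A, val x == k]].
  exact: filter_in_sublists.
apply/setP => x; rewrite in_oset mem_filter.
apply/idP/andP => [xA | [/existsP[y /andP[yA /eqP/val_inj <-]] //]].
by split; [apply/existsP; exists x; rewrite xA eqxx | rewrite -in_oset; apply: As].
Qed.

Lemma ord_in_iota n (x : 'I_n) : val x \in iota 0 n.
Proof. by rewrite mem_iota add0n ltn_ord. Qed.

Lemma set3_oset n (a b c : 'I_n) : [set a; b; c] = oset n [:: val a; val b; val c].
Proof. by apply/setP => x; rewrite in_oset !inE -!val_eqE orbA. Qed.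

(** * Deciding triples, hyperplanes and Grassmannian isomorphisms *)

Definition triples_listed (kind : nat -> nat -> nat -> bool) (ts : seq (seq nat)) : bool :=
  let ok a b c := [&& 0 < a, a < b, b < c, kind a b c & sed_mul_pm a b c] in
  all (fun a => all (fun b => all (fun c =>
        ok a b c ==> has (oset_eqb 16 [:: a; b; c]) ts)
      (iota 0 16)) (iota 0 16)) (iota 0 16) &&
  all (fun t => if t is [:: a; b; c] then (c < 16) && ok a b c else false) ts.

Lemma triple_withE (R : numDomainType) kind ts : triples_listed kind ts ->
  [set T | `[< triple_with R kind T >]] = osets 16 ts.
Proof.
case/andP => /allP complete /allP sound; apply/setP => T; rewrite inE.
apply/asboolP/idP => [[a [b [c [/and4P[a0 ab bc abc] -> /sed_mul_pmP pm]]]] | ].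
  have := allP (allP (complete _ (ord_in_iota a)) _ (ord_in_iota b)) _ (ord_in_iota c).
  by rewrite a0 ab bc abc pm set3_oset => /mem_osets.
move=> /osetsP[t /sound + ->].
case: t => [|a [|b [|c []]]] //= /andP[c16 /and5P[a0 ab bc abc pm]].
have b16 := ltn_trans bc c16; have a16 := ltn_trans ab b16.
exists (inord a), (inord b), (inord c).
split; first by rewrite !inordK // a0 ab bc abc.
  by rewrite set3_oset /= !inordK.
by apply/sed_mul_pmP; rewrite !inordK.
Qed.

Definition ksubsets m k := [seq c <- sublists (iota 0 m) | ocard m c == k].

Lemma card_eq_osets m k : [set A : {set 'I_m} | #|A| == k] = osets m (ksubsets m k).
Proof.
apply/setP => A; rewrite inE; apply/idP/idP => [cardA | ].
  have /subset_osetP[c cs defA] : A \subset oset m (iota 0 m).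
    by apply/subsetP => x _; rewrite in_oset ord_in_iota.
  by rewrite defA oset_in_osets // mem_filter cs -card_oset -defA cardA.
by case/osetsP=> c; rewrite mem_filter => /andP[ck _] ->; rewrite card_oset.
Qed.

Lemma G2_pointsE m : G2_points m = osets m (ksubsets m 2).
Proof. exact: card_eq_osets. Qed.

Definition G2_line_lists m :=
  [seq [seq p <- ksubsets m 2 | osubset m p t] | t <- ksubsets m 3].

Lemma G2_linesE m : G2_lines m = [set:: map (osets m) (G2_line_lists m)].
Proof.
rewrite /G2_lines card_eq_osets /osets imset_set_seq -!map_comp.
apply: (congr1 (fun s => [set:: s])); apply: eq_map => t /=.
by rewrite G2_pointsE (osets_filter _ (subset_oset _^~ _)).
Qed.

Definition G2_labelling n m (lab : nat -> seq nat) (pts : seq nat) (lines : seq (seq nat)) :=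
  [&& all (fun a => all (fun b => oset_eqb m (lab a) (lab b) ==> (a == b)) pts) pts,
      same_osets m (map lab (onorm n pts)) (ksubsets m 2),
      all (fun l => has (same_osets m (map lab (onorm n l))) (G2_line_lists m)) lines &
      all (fun L => has (fun l => same_osets m L (map lab (onorm n l))) lines)
        (G2_line_lists m)].

Lemma G2_labellingP n m lab pts lines : G2_labelling n m lab pts lines ->
  inc_iso (oset n pts) (osets n lines) (G2_points m) (G2_lines m).
Proof.
case/and4P => /allP lab_inj lab_pts lines_img img_lines.
pose f (x : 'I_n) := oset m (lab x).
have imsetE s : f @: oset n s = osets m (map lab (onorm n s)).
  by rewrite -[oset n s]set_enum imset_set_seq -val_enum_oset /osets -!map_comp.
exists f; split.
- move=> x y; rewrite !in_oset => xp yp /eqP; rewrite oset_eqE => fxy.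
  by apply: val_inj; apply/eqP; apply: (implyP (allP (lab_inj _ xp) _ yp)).
- by rewrite imsetE G2_pointsE; apply: eq_osets.
rewrite /osets imset_set_seq G2_linesE -map_comp.
rewrite (eq_map (g := osets m \o (fun l => map lab (onorm n l)))); last first.
  by move=> l /=; rewrite imsetE.
rewrite map_comp; apply: eq_set_seq_map; first by move=> ? ?; apply: eq_osets.
  by rewrite all_map.
by apply/allP => L /(allP img_lines); rewrite has_map.
Qed.

Section Hyperplanes.
Variables (n : nat) (pts : seq nat) (lines : seq (seq nat)).

Definition hyperplaneb h :=
  [&& osubset n h pts, ~~ osubset n pts h &
      all (fun l => osubset n l h || (ocard n [seq k <- l | k \in h] == 1)) lines].

Lemma is_hyperplaneE h :
  is_hyperplane (oset n pts) (osets n lines) (oset n h) = hyperplaneb h.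
Proof.
rewrite /is_hyperplane properE !subset_oset /osets forall_in_set_seq all_map -andbA.
by congr [&& _, _ & _]; apply: eq_all => l /=; rewrite subset_oset setI_oset card_oset.
Qed.

Lemma hyperplanesE hs :
  all (fun h => hyperplaneb h ==> has (oset_eqb n h) hs) (sublists pts) ->
  all hyperplaneb hs ->
  hyperplanes (oset n pts) (osets n lines) = osets n hs.
Proof.
move=> /allP complete /allP sound; apply/setP => H; rewrite inE.
apply/idP/idP => [hypH | ]; last first.
  by case/osetsP=> h hs_h ->; rewrite is_hyperplaneE sound.
have /subset_osetP[h subh defH] : H \subset oset n pts.
  by case/andP: hypH => /proper_sub.
rewrite defH is_hyperplaneE in hypH *.
exact/mem_osets/(implyP (complete h subh)).
Qed.

Definition veldkamp_lineb h1 h2 h :=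
  [|| oset_eqb n h h1, oset_eqb n h h2 |
      oset_eqb n [seq k <- h1 | k \in h2] [seq k <- h1 | k \in h] &&
      oset_eqb n [seq k <- h1 | k \in h] [seq k <- h2 | k \in h]].

Lemma veldkamp_lineE hs h1 h2 :
  hyperplanes (oset n pts) (osets n lines) = osets n hs ->
  veldkamp_line (oset n pts) (osets n lines) (oset n h1) (oset n h2) =
  osets n [seq h <- hs | veldkamp_lineb h1 h2 h].
Proof.
move=> hypsE; rewrite /veldkamp_line hypsE; apply: osets_filter => h.
by rewrite !setI_oset !oset_eqE.
Qed.

End Hyperplanes.

Lemma collinear_osets n lines (p q : 'I_n) :
  collinear (osets n lines) p q = has (fun l => (val p \in l) && (val q \in l)) lines.
Proof.
rewrite /collinear /osets exists_in_set_seq has_map.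
by apply: eq_has => l; rewrite /= !in_oset.
Qed.

(** * The Desargues configuration of the defective triples *)

Definition defective_list : seq (seq nat) :=
  [:: [:: 3; 5; 6]; [:: 3; 9; 10]; [:: 3; 13; 14]; [:: 5; 9; 12]; [:: 5; 11; 14];
      [:: 6; 10; 12]; [:: 6; 11; 13]; [:: 7; 9; 14]; [:: 7; 10; 13]; [:: 7; 11; 12]].

Definition ordinary_list : seq (seq nat) :=
  [:: [:: 1; 2; 3]; [:: 1; 4; 5]; [:: 1; 6; 7]; [:: 1; 8; 9]; [:: 1; 10; 11];
      [:: 1; 12; 13]; [:: 1; 14; 15]; [:: 2; 4; 6]; [:: 2; 5; 7]; [:: 2; 8; 10];
      [:: 2; 9; 11]; [:: 2; 12; 14]; [:: 2; 13; 15]; [:: 3; 4; 7]; [:: 3; 8; 11];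
      [:: 3; 12; 15]; [:: 4; 8; 12]; [:: 4; 9; 13]; [:: 4; 10; 14]; [:: 4; 11; 15];
      [:: 5; 8; 13]; [:: 5; 10; 15]; [:: 6; 8; 14]; [:: 6; 9; 15]; [:: 7; 8; 15]].

Lemma defective_triplesE (R : numDomainType) :
  defective_triples R = osets 16 defective_list.
Proof. by apply: triple_withE; vm_compute. Qed.

Lemma ordinary_triplesE (R : numDomainType) :
  ordinary_triples R = osets 16 ordinary_list.
Proof. by apply: triple_withE; vm_compute. Qed.

Lemma distinguished_triplesE (R : numDomainType) :
  distinguished_triples R = osets 16 (ordinary_list ++ defective_list).
Proof. by apply: triple_withE; vm_compute. Qed.

Definition special_list := [:: 1; 2; 4; 8; 15].
Definition desargues_list := [:: 3; 5; 6; 7; 9; 10; 11; 12; 13; 14].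

Lemma imag_unitsE : imag_units = oset 16 (iota 1 15).
Proof. by apply/setP => x; rewrite in_oset inE mem_iota lt0n add1n ltn_ord andbT. Qed.

Lemma special_unitsE : special_units = oset 16 special_list.
Proof. by apply/setP => x; rewrite in_oset !inE -!val_eqE /= !inordK // !orbA. Qed.

Local Notation desargues_units := (imag_units :\: special_units).

Lemma desargues_list_spec :
  all (fun k => (k \notin special_list) && (k \in iota 1 15) == (k \in desargues_list))
      (iota 0 16).
Proof. by vm_compute. Qed.

Lemma desargues_unitsE : desargues_units = oset 16 desargues_list.
Proof.
apply/setP => x; rewrite inE imag_unitsE special_unitsE !in_oset.
exact/eqP/(allP desargues_list_spec _ (ord_in_iota x)).
Qed.

(* The ten perps of points, then the five Pasch configurations. *)
Definition hyperplane_list : seq (seq nat) :=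
  [:: [:: 3; 5; 6; 7]; [:: 3; 7; 11; 12]; [:: 3; 9; 10; 11]; [:: 3; 12; 13; 14];
      [:: 5; 7; 10; 13]; [:: 5; 9; 12; 13]; [:: 5; 10; 11; 14]; [:: 6; 7; 9; 14];
      [:: 6; 9; 11; 13]; [:: 6; 10; 12; 14]; [:: 3; 5; 6; 9; 10; 12];
      [:: 3; 5; 6; 11; 13; 14]; [:: 3; 7; 9; 10; 13; 14]; [:: 5; 7; 9; 11; 12; 14];
      [:: 6; 7; 10; 11; 12; 13]].

Lemma desargues_hyperplanesE :
  hyperplanes (oset 16 desargues_list) (osets 16 defective_list) =
  osets 16 hyperplane_list.
Proof. by apply: hyperplanesE; vm_compute. Qed.

Lemma desargues_hyperplanes (R : numDomainType) :
  hyperplanes desargues_units (defective_triples R) = osets 16 hyperplane_list.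
Proof. by rewrite desargues_unitsE defective_triplesE desargues_hyperplanesE. Qed.

Lemma in_desargues_hyperplanes (R : numDomainType) (Q : {set 'I_16} -> Prop) :
  (forall h, h \in hyperplane_list -> Q (oset 16 h)) ->
  {in hyperplanes desargues_units (defective_triples R), forall H, Q H}.
Proof. by move=> Qh H; rewrite desargues_hyperplanes => /osetsP[h hh ->]; apply: Qh. Qed.

Lemma defective_free_indices :
  all (fun k => all (fun t => k \notin t) defective_list == (k \in special_list)) (iota 1 15).
Proof. by vm_compute. Qed.

Lemma defective_free_unitsP (R : numDomainType) (a : 'I_16) : a \in imag_units ->
  (forall T, T \in defective_triples R -> a \notin T) <-> a \in special_units.
Proof.
rewrite imag_unitsE special_unitsE defective_triplesE !in_oset.
move=> /(allP defective_free_indices)/eqP <-.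
split => [noT | /allP noT _ /osetsP[t tD ->]]; last by rewrite in_oset noT.
by apply/allP => t tD; rewrite -in_oset; apply/noT/oset_in_osets.
Qed.

Lemma uniq_defective_list : uniq (map (onorm 16) defective_list).
Proof. by vm_compute. Qed.

Lemma uniq_ordinary_list : uniq (map (onorm 16) ordinary_list).
Proof. by vm_compute. Qed.

Lemma triple_counts :
  all (fun k => (count (fun l => k \in l) defective_list == 3) &&
                (count (fun l => k \in l) ordinary_list == 4)) desargues_list.
Proof. by vm_compute. Qed.

Lemma defective_ordinary_counts (R : numDomainType) (a : 'I_16) : a \in desargues_units ->
  #|[set T in defective_triples R | a \in T]| = 3 /\
  #|[set T in ordinary_triples R | a \in T]| = 4.
Proof.
rewrite desargues_unitsE defective_triplesE ordinary_triplesE in_oset.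
move=> /(allP triple_counts)/andP[/eqP D3 /eqP O4].
by rewrite (card_osets_with a uniq_defective_list) (card_osets_with a uniq_ordinary_list).
Qed.

(* A point [k] is labelled by the indices of the members of [hs] that miss it:
   for the five Pasch hyperplanes of the Desargues configuration, resp. the four
   lines of a Pasch configuration, this is the classical labelling by G_2(5),
   resp. G_2(4). *)
Definition avoid_label (hs : seq (seq nat)) (k : nat) : seq nat :=
  [seq i <- iota 0 (size hs) | k \notin nth [::] hs i].

Definition pasch_list := [seq h <- hyperplane_list | ocard 16 h == 6].

Lemma desargues_labelling :
  G2_labelling 16 5 (avoid_label pasch_list) desargues_list defective_list.
Proof. by vm_compute. Qed.

Lemma defective_desargues (R : numDomainType) :
  inc_iso desargues_units (defective_triples R) (G2_points 5) (G2_lines 5).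
Proof.
rewrite desargues_unitsE defective_triplesE; exact: G2_labellingP desargues_labelling.
Qed.

Definition xor_index (s : seq nat) : nat := foldr Nat.lxor 0 s.

Definition phi (H : {set 'I_16}) : 'I_16 := inord (xor_index (map val (enum H))).

Definition hyperplane_index h := xor_index (onorm 16 h).

Lemma hyperplane_index_small : all (fun h => hyperplane_index h < 16) hyperplane_list.
Proof. by vm_compute. Qed.

Lemma val_phi_oset h : h \in hyperplane_list -> val (phi (oset 16 h)) = hyperplane_index h.
Proof.
by move=> /(allP hyperplane_index_small) lt16; rewrite /phi val_enum_oset /= inordK.
Qed.

Lemma inord_set_seq n ks : all (fun k => k < n.+1) ks -> [set:: map inord ks] = oset n.+1 ks.
Proof.
move=> /allP ks_small; apply/setP => x; rewrite inE in_oset; apply/mapP/idP.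
  by case=> k kks ->; rewrite /= inordK ?ks_small.
by move=> xks; exists (val x); rewrite ?inord_val.
Qed.

Lemma phi_osets hs : {subset hs <= hyperplane_list} ->
  phi @: osets 16 hs = oset 16 (map hyperplane_index hs).
Proof.
move=> hs_hyp; have small h : h \in hs -> hyperplane_index h < 16.
  by move=> /hs_hyp hh; rewrite -(val_phi_oset hh) ltn_ord.
have phiE : {in hs, phi \o oset 16 =1 inord \o hyperplane_index}.
  by move=> h hh; apply: val_inj; rewrite /= val_phi_oset ?hs_hyp // inordK ?small.
rewrite /osets imset_set_seq -map_comp ((eq_in_map _ _ _).1 phiE) map_comp inord_set_seq //.
by apply/allP => _ /mapP[h hh ->]; apply: small.
Qed.

Lemma hyperplane_index_inj :
  all (fun h1 => all (fun h2 =>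
    (hyperplane_index h1 == hyperplane_index h2) ==> oset_eqb 16 h1 h2) hyperplane_list)
  hyperplane_list.
Proof. by vm_compute. Qed.

Lemma phi_injective (R : numDomainType) :
  {in hyperplanes desargues_units (defective_triples R) &, injective phi}.
Proof.
move=> H1 H2; rewrite desargues_hyperplanes => /osetsP[h1 h1h ->] /osetsP[h2 h2h ->].
move=> /(congr1 val); rewrite (val_phi_oset h1h) (val_phi_oset h2h) => /eqP eq12.
exact/eq_oset/(implyP (allP (allP hyperplane_index_inj _ h1h) _ h2h)).
Qed.

Lemma hyperplane_indices : oset_eqb 16 (map hyperplane_index hyperplane_list) (iota 1 15).
Proof. by vm_compute. Qed.

Lemma phi_onto (R : numDomainType) :
  phi @: hyperplanes desargues_units (defective_triples R) = imag_units.
Proof.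
by rewrite desargues_hyperplanes phi_osets // imag_unitsE; apply: eq_oset hyperplane_indices.
Qed.

Definition veldkamp_image h1 h2 :=
  map hyperplane_index [seq h <- hyperplane_list | veldkamp_lineb 16 h1 h2 h].

Lemma phi_veldkamp_line h1 h2 :
  phi @: veldkamp_line (oset 16 desargues_list) (osets 16 defective_list)
                       (oset 16 h1) (oset 16 h2) = oset 16 (veldkamp_image h1 h2).
Proof.
rewrite (veldkamp_lineE h1 h2 desargues_hyperplanesE).
by rewrite phi_osets // => h; rewrite mem_filter => /andP[].
Qed.

Definition veldkamp_images :=
  [seq veldkamp_image h1 h2 | h1 <- hyperplane_list,
                              h2 <- [seq h2 <- hyperplane_list | ~~ oset_eqb 16 h1 h2]].

Lemma phi_veldkamp_lines :
  [set phi @: (V : {set {set 'I_16}}) |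
     V in veldkamp_lines (oset 16 desargues_list) (osets 16 defective_list)] =
  osets 16 veldkamp_images.
Proof.
rewrite /veldkamp_lines desargues_hyperplanesE; apply/setP => W.
apply/imsetP/osetsP => [[V /imset2P[H1 H2 /osetsP[h1 h1h ->]]] | ].
  rewrite inE => /andP[/osetsP[h2 h2h ->]]; rewrite oset_eqE => h12 -> ->.
  exists (veldkamp_image h1 h2); last exact: phi_veldkamp_line.
  by apply/allpairsPdep; exists h1, h2; rewrite mem_filter h12.
case=> t /allpairsPdep[h1 [h2 [h1h]]]; rewrite mem_filter => /andP[h12 h2h] -> ->.
exists (veldkamp_line (oset 16 desargues_list) (osets 16 defective_list)
                      (oset 16 h1) (oset 16 h2)); last by rewrite phi_veldkamp_line.
apply/imset2P; exists (oset 16 h1) (oset 16 h2); first exact: oset_in_osets.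
  by rewrite inE oset_in_osets ?oset_eqE.
exact: erefl.
Qed.

Lemma veldkamp_images_triples :
  same_osets 16 veldkamp_images (ordinary_list ++ defective_list).
Proof. by vm_compute. Qed.

Lemma phi_veldkamp (R : numDomainType) :
  [set phi @: (V : {set {set 'I_16}}) |
     V in veldkamp_lines desargues_units (defective_triples R)] =
  distinguished_triples R.
Proof.
rewrite desargues_unitsE defective_triplesE distinguished_triplesE phi_veldkamp_lines.
exact: eq_osets veldkamp_images_triples.
Qed.

Lemma card4_hyperplanes_defective :
  all (fun h => (ocard 16 h == 4) == has (fun t => hyperplane_index h \in t) defective_list)
      hyperplane_list.
Proof. by vm_compute. Qed.

Lemma hyperplane_card4P (R : numDomainType) :
  {in hyperplanes desargues_units (defective_triples R), forall H : {set 'I_16},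
     #|H| = 4 <-> exists2 T, T \in defective_triples R & phi H \in T}.
Proof.
apply: in_desargues_hyperplanes => h hh.
have /eqP hcard4 := allP card4_hyperplanes_defective h hh.
rewrite defective_triplesE card_oset; split => [/eqP | [T]].
  rewrite hcard4 => /hasP[t tD ht]; exists (oset 16 t); first exact: oset_in_osets.
  by rewrite in_oset val_phi_oset.
case/osetsP=> t tD ->; rewrite in_oset (val_phi_oset hh) => ht.
by apply/eqP; rewrite hcard4; apply/hasP; exists t.
Qed.

Lemma card6_hyperplanes_special :
  all (fun h => (ocard 16 h == 6) == (hyperplane_index h \in special_list)) hyperplane_list.
Proof. by vm_compute. Qed.

Lemma hyperplane_card6P (R : numDomainType) :
  {in hyperplanes desargues_units (defective_triples R), forall H : {set 'I_16},
     #|H| = 6 <-> phi H \in special_units}.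
Proof.
apply: in_desargues_hyperplanes => h hh.
rewrite card_oset special_unitsE in_oset (val_phi_oset hh).
rewrite -(eqP (allP card6_hyperplanes_special h hh)).
by split => [-> | /eqP].
Qed.

Lemma card4_hyperplanes_perp :
  all (fun h => let p := hyperplane_index h in (ocard 16 h == 4) ==>
    (p \in desargues_list) && oset_eqb 16 h (p :: [seq q <- desargues_list |
      (q != p) && ~~ has (fun l => (p \in l) && (q \in l)) defective_list]))
    hyperplane_list.
Proof. by vm_compute. Qed.

Lemma hyperplane_card4_perp (R : numDomainType) :
  {in hyperplanes desargues_units (defective_triples R), forall H : {set 'I_16}, #|H| = 4 ->
     exists2 p, p \in desargues_units &
       H = p |: [set q in desargues_units | (q != p) && ~~ collinear (defective_triples R) p q]}.
Proof.
apply: in_desargues_hyperplanes => h hh; rewrite card_oset => /eqP hcard4.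
have /andP[hP /eq_oset defH] := implyP (allP card4_hyperplanes_perp h hh) hcard4.
rewrite desargues_unitsE defective_triplesE.
exists (phi (oset 16 h)); first by rewrite in_oset val_phi_oset.
apply/setP => x; rewrite {1}defH in_oset in_setU1 in_set in_oset collinear_osets.
by rewrite -!val_eqE (val_phi_oset hh) in_cons mem_filter andbC.
Qed.

Definition lines_within h := [seq l <- defective_list | osubset 16 l h].

Lemma card6_hyperplanes_pasch :
  all (fun h => (ocard 16 h == 6) ==>
    G2_labelling 16 4 (avoid_label (lines_within h)) h (lines_within h)) hyperplane_list.
Proof. by vm_compute. Qed.

Lemma hyperplane_card6_pasch (R : numDomainType) :
  {in hyperplanes desargues_units (defective_triples R), forall H : {set 'I_16}, #|H| = 6 ->
     inc_iso H [set l in defective_triples R | l \subset H] (G2_points 4) (G2_lines 4)}.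
Proof.
apply: in_desargues_hyperplanes => h hh; rewrite card_oset => /eqP hcard6.
rewrite defective_triplesE (osets_filter _ (subset_oset _^~ h)).
exact/G2_labellingP/(implyP (allP card6_hyperplanes_pasch h hh)).
Qed.

Unset Implicit Arguments.
Local Open Scope ring_scope.

Theorem mainTheorem2 (R : realType) :
  (* (i) *)
  (forall a : 'I_16, a \in imag_units ->
     ((forall T, T \in defective_triples R -> a \notin T) <-> a \in special_units)) /\
  (forall a : 'I_16, a \in imag_units :\: special_units ->
     #|[set T in defective_triples R | a \in T]| = 3%N /\
     #|[set T in ordinary_triples R | a \in T]| = 4%N) /\
  (* (ii) *)
  inc_iso (imag_units :\: special_units) (defective_triples R)
          (G2_points 5) (G2_lines 5) /\
  (* (iii) *)
  (let P := imag_units :\: special_units in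
   let L := defective_triples R in
   exists phi : {set 'I_16} -> 'I_16,
     [/\ {in hyperplanes P L &, injective phi},
         phi @: hyperplanes P L = imag_units &
         [set phi @: (V : {set {set 'I_16}}) | V in veldkamp_lines P L] = distinguished_triples R] /\
     [/\
         {in hyperplanes P L, forall H : {set 'I_16},
            #|H| = 4%N <-> exists2 T, T \in defective_triples R & phi H \in T},
         {in hyperplanes P L, forall H : {set 'I_16},
            #|H| = 6%N <-> phi H \in special_units},
         {in hyperplanes P L, forall H : {set 'I_16}, #|H| = 4%N ->
            exists2 p, p \in P &
              H = p |: [set q in P | (q != p) && ~~ collinear L p q]} &
         {in hyperplanes P L, forall H : {set 'I_16}, #|H| = 6%N ->
            inc_iso H [set l in L | l \subset H] (G2_points 4) (G2_lines 4)}]).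
Proof.
split; first exact: defective_free_unitsP.
split; first exact: defective_ordinary_counts.
split; first exact: defective_desargues.
exists phi; split; split.
- exact: phi_injective.
- exact: phi_onto.
- exact: phi_veldkamp.
- exact: hyperplane_card4P.
- exact: hyperplane_card6P.
- exact: hyperplane_card4_perp.
- exact: hyperplane_card6_pasch.
Qed.
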